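(* Let $k$ be a field, $X$ a finite non-empty set, and for every $a\in X$ let $\sigma_a,\tau_a:X\to X$ be maps with each $\sigma_a$ bijective; let ${\cal A}$ be the special set-theoretic Yang–Baxter algebra of these data. Suppose $(X,+,\circ)$ is a brace and, for all $a,b\in X$, $\sigma_a(b)=-a+a\circ b$, $\sigma_{\sigma_a(b)}(\tau_b(a))=a$ and $w_aw_b=w_{a\circ b}$. Let ${\cal F}=\sum_{a\in X}h_a\otimes w_a^{-1}$ and, for an integer $n\ge2$, \[{\cal F}_{12\ldots n-1,n}:=\sum_{a_1,\ldots,a_{n-1}\in X}h_{a_1}\otimes h_{\sigma_{a_1}(a_2)}\otimes h_{\sigma_{a_1}(\sigma_{a_2}(a_3))}\otimes\cdots\otimes h_{\sigma_{a_1}(\sigma_{a_2}(\cdots\sigma_{a_{n-2}}(a_{n-1})\cdots))}\otimes w_{a_{n-1}}^{-1}w_{a_{n-2}}^{-1}\cdots w_{a_1}^{-1}\in{\cal A}^{\otimes n},\] and define recursively ${\cal F}_{12}:={\cal F}$ and ${\cal F}_{12\ldots n}:=({\cal F}_{12\ldots n-1}\otimes1_{\cal A})\,{\cal F}_{12\ldots n-1,n}$ for $n\ge3$. Then: \begin{enumerate} \item ${\cal F}_{12\ldots n-1,n}=(\Delta^{(n-1)}\otimes\mathrm{id}){\cal F}$; \item ${\cal F}_{12\ldots n}=\sum_{a_1,\ldots,a_{n-1}\in X}h_{a_1}\otimes h_{a_2}w_{a_1}^{-1}\otimes h_{a_3}w_{a_1\circ a_2}^{-1}\otimes\cdots\otimes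 h_{a_{n-1}}w^{-1}_{a_1\circ a_2\circ\cdots\circ a_{n-2}}\otimes w^{-1}_{a_1\circ a_2\circ\cdots\circ a_{n-1}}.$ \end{enumerate}
   Context: The special set-theoretic Yang–Baxter algebra ${\cal A}$ is the unital associative $k$-algebra generated by $1_{\cal A},h_a,w_a,w_a^{-1}$ ($a\in X$) subject to, for all $a,b\in X$: $h_ah_b=\delta_{a,b}h_a$, $w_a^{-1}w_a=w_aw_a^{-1}=1_{\cal A}$, $w_aw_b=w_{\sigma_a(b)}w_{\tau_b(a)}$, $w_ah_b=h_{\sigma_a(b)}w_a$, and $\sum_{a\in X}h_a=1_{\cal A}$. A brace is a set with two group operations $+$ (abelian) and $\circ$ such that $a\circ(b+c)=a\circ b-a+a\circ c$. $\Delta:{\cal A}\to{\cal A}\otimes{\cal A}$ is the algebra homomorphism with $\Delta(w_a^{\pm1})=w_a^{\pm1}\otimes w_a^{\pm1}$ and $\Delta(h_a)=\sum_{b,c\in X,\,b+c=a}h_b\otimes h_c$; $\Delta^{(m)}:{\cal A}\to{\cal A}^{\otimes m}$ denotes the iterated (coassociative) coproduct, with $\Delta^{(1)}=\mathrm{id}$ and $\Delta^{(2)}=\Delta$. *)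

(* Free algebras are monoid algebras over free monoids
   (multinomials' monalg: {malg k[{fmonom I}]}); quotient algebras (the
   Yang-Baxter algebra A and its tensor powers A^{(x)n}) are represented by
   their presentations: an equality in the quotient is membership of the
   difference in the two-sided ideal generated by the defining relations. *)
From HB Require Import structures.
From mathcomp Require Import all_boot all_order all_algebra.
From mathcomp Require Import monalg.

Set Implicit Arguments.
Unset Strict Implicit.
Unset Printing Implicit Defensive.

Import GRing.Theory.
Local Open Scope ring_scope.

Section FreeAlgebra.
Variable k : fieldType.

Definition FreeA (I : choiceType) := {malg k[{fmonom I}]}.

Definition gen (I : choiceType) (i : I) : FreeA I := << fmu i >>.

Definition ext (I J : choiceType) (img : I -> FreeA J) (p : FreeA I) : FreeA J :=
  mmap (fun c : k => c%:A) (fun m : {fmonom I} => \prod_(i <- (m : seq I)) img i) p.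

Definition rename (I J : choiceType) (f : I -> J) : FreeA I -> FreeA J :=
  ext (fun i => gen (f i)).

Definition ideal_gen (I : choiceType) (R : FreeA I -> Prop) (x : FreeA I) : Prop :=
  exists s : seq (FreeA I * FreeA I * FreeA I),
    (forall t, t \in s -> R t.1.2) /\
    x = \sum_(t <- s) t.1.1 * t.1.2 * t.2.
End FreeAlgebra.
Arguments gen {k I} i.
Arguments ext {k I J} img p.
Arguments rename {k I J} f _.
Arguments ideal_gen {k I} R x.

Lemma two_le_SS (m : nat) : (2 <= m.+2)%N. Proof. by []. Qed.

Section YBAlgebra.
Variable k : fieldType.
Variable X : finType.
Variables sigma tau : X -> X -> X. (* sigma a b = sigma_a(b), tau b a = tau_b(a) *)

Definition Gen := (X + X + X)%type.
Definition hgen (a : X) : Gen := inl (inl a).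
Definition wgen (a : X) : Gen := inl (inr a).
Definition wigen (a : X) : Gen := inr a.

Definition hG (a : X) : FreeA k Gen := gen (hgen a).
Definition wG (a : X) : FreeA k Gen := gen (wgen a).
Definition wiG (a : X) : FreeA k Gen := gen (wigen a).

Definition relA (r : FreeA k Gen) : Prop :=
  (exists a b, r = hG a * hG b - (a == b)%:R * hG a) \/
  (exists a, r = wiG a * wG a - 1) \/
  (exists a, r = wG a * wiG a - 1) \/
  (exists a b, r = wG a * wG b - wG (sigma a b) * wG (tau b a)) \/
  (exists a b, r = wG a * hG b - hG (sigma a b) * wG a) \/
  (r = \sum_(a : X) hG a - 1).

Definition eqYB (x y : FreeA k Gen) : Prop := ideal_gen (@relA) (x - y).

(* A^{(x)n} = free algebra on n disjoint copies of the generators, modulo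
   the relations of A in each copy and commutation of distinct copies *)
Definition TGen (n : nat) := ('I_n * Gen)%type.

(* the embedding x |-> 1 (x) .. (x) x (x) .. (x) 1 (x in slot i) *)
Definition slot (n : nat) (i : 'I_n) : FreeA k Gen -> FreeA k (TGen n) :=
  rename (fun g : Gen => (i, g)).

Definition relT (n : nat) (r : FreeA k (TGen n)) : Prop :=
  (exists (i : 'I_n) r0, relA r0 /\ r = slot i r0) \/
  (exists (i j : 'I_n) (g g' : Gen),
      i != j /\ r = gen (i, g) * gen (j, g') - gen (j, g') * gen (i, g)).

Definition eqTens (n : nat) (x y : FreeA k (TGen n)) : Prop :=
  ideal_gen (@relT n) (x - y).

Definition Fcal : FreeA k (TGen 2) :=
  \sum_(a : X) slot ord0 (hG a) * slot ord_max (wiG a).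

(* slot i of the summand of F_{12...n-1,n} indexed by s = [a_1; ...; a_{n-1}] *)
Definition slotF (s : seq X) (i : nat) : FreeA k Gen :=
  match drop i s with
  | a :: _ => hG (foldr (fun b y => sigma b y) a (take i s))
  | [::] => \prod_(a <- rev s) wiG a
  end.

Definition Fbar (n : nat) : FreeA k (TGen n) :=
  \sum_(a : (n.-1).-tuple X) \prod_(i < n) slot i (slotF a i).

Definition widenT (m : nat) : FreeA k (TGen m) -> FreeA k (TGen m.+1) :=
  rename (fun q : TGen m => (widen_ord (leqnSn m) q.1, q.2)).

Fixpoint Ffull_aux (p : nat) : FreeA k (TGen p.+2) :=
  match p return FreeA k (TGen p.+2) with
  | 0 => Fcal
  | q.+1 => widenT (Ffull_aux q) * Fbar q.+3
  end.

(* F_{12...n}, for n >= 2 (values for n < 2 are irrelevant) *)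
Definition Ffull (n : nat) : FreeA k (TGen n) :=
  match n return FreeA k (TGen n) with
  | (p.+1).+1 => Ffull_aux p
  | _ => 1
  end.

Section Brace.
Variable add : X -> X -> X.
Variable circ : X -> X -> X.

Definition deltaGen (g : Gen) : FreeA k (TGen 2) :=
  match g with
  | inl (inl a) => \sum_(bc : X * X | add bc.1 bc.2 == a)
                      slot ord0 (hG bc.1) * slot ord_max (hG bc.2)
  | inl (inr a) => slot ord0 (wG a) * slot ord_max (wG a)
  | inr a => slot ord0 (wiG a) * slot ord_max (wiG a)
  end.

Definition Delta : FreeA k Gen -> FreeA k (TGen 2) := ext deltaGen.

(* Delta (x) id^{(x) m} : A^{(x) m.+1} -> A^{(x) m.+2} *)
Definition Dslot0 (m : nat) : FreeA k (TGen m.+1) -> FreeA k (TGen m.+2) :=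
  ext (fun p : TGen m.+1 =>
    if val p.1 == 0%N then
      rename (fun q : TGen 2 => (widen_ord (two_le_SS m) q.1, q.2)) (deltaGen p.2)
    else gen (lift ord0 p.1, p.2)).

(* iterated coproduct Delta^{(m)} : A -> A^{(x) m}, Delta^{(1)} = id,
   Delta^{(m+1)} = (Delta (x) id^{(x)(m-1)}) o Delta^{(m)}; m = 0 unused *)
Fixpoint Dn_aux (p : nat) : FreeA k Gen -> FreeA k (TGen p.+1) :=
  match p return FreeA k Gen -> FreeA k (TGen p.+1) with
  | 0 => slot ord0
  | q.+1 => fun x => Dslot0 (Dn_aux q x)
  end.

Definition Dn (m : nat) : FreeA k Gen -> FreeA k (TGen m) :=
  match m return FreeA k Gen -> FreeA k (TGen m) with
  | 0 => fun _ => 0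
  | p.+1 => Dn_aux p
  end.

(* f (x) id : A (x) A -> A^{(x) n}, for f : A -> A^{(x) (n-1)} *)
Definition tensor_id (n : nat) (f : FreeA k Gen -> FreeA k (TGen n.-1)) :
    FreeA k (TGen 2) -> FreeA k (TGen n) :=
  ext (fun q : TGen 2 =>
    if val q.1 == 0%N then
      rename (fun r : TGen n.-1 => (widen_ord (leq_pred n) r.1, r.2)) (f (gen q.2))
    else if insub (n.-1) is Some i then gen (i, q.2) else 0).

(* slot i of the summand of the right-hand side of claim 2, s = [a_1;...;a_{n-1}]:
   h_{a_{i+1}} w^{-1}_{a_1 o ... o a_i}  (no h for the last slot, no w for slot 0) *)
Definition slotG (s : seq X) (i : nat) : FreeA k Gen :=
  (if drop i s is a :: _ then hG a else 1) *
  (if take i s is a :: t then wiG (foldl circ a t) else 1).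

Definition Fn_closed (n : nat) : FreeA k (TGen n) :=
  \sum_(a : (n.-1).-tuple X) \prod_(i < n) slot i (slotG a i).
End Brace.
End YBAlgebra.

(* Put lam (a_1, ..., a_m) := (a_1, sigma_{a_1}(a_2), ..., sigma_{a_1 o ... o a_(m-1)}(a_m)).
   Since sigma_a(b) = - a + a o b is additive in b and sigma_{a o b} = sigma_a sigma_b, lam is
   a bijection of X^m whose entries add up to a_1 o ... o a_m.  Slot i of the summand of
   F_{12...n-1,n} indexed by a is h of the i-th entry of lam a, and its last slot is
   w^{-1}_{a_1 o ... o a_(n-1)}; reindexing along lam turns F_{12...n-1,n} into the sum of
   h_{b_1} (x) ... (x) h_{b_(n-1)} (x) w^{-1}_{b_1 + ... + b_(n-1)}, which is
   (Delta^{(n-1)} (x) id) F because Delta^{(n-1)}(h_a) is the sum of h_{b_1} (x) ... (x)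
   h_{b_(n-1)} over all b with b_1 + ... + b_(n-1) = a.
   For the closed form of F_{12...n}, multiply the closed form of F_{12...n-1} with
   F_{12...n-1,n} slot by slot: w^{-1}_c h_{sigma_c(b)} = h_b w^{-1}_c brings the h's of the
   two factors together, and since the h's are orthogonal idempotents only the pairs of
   summands whose index tuples agree on the common slots survive. *)

From HB Require Import structures.
From mathcomp Require Import all_boot all_order all_algebra.
From mathcomp Require Import monalg.
Import GRing.Theory.
Local Open Scope ring_scope.
Set Implicit Arguments.
Unset Strict Implicit.
Unset Printing Implicit Defensive.

(** * Free algebras and their ideals *)

Section FreeAlgebra.
Variable k : fieldType.

Lemma fmonom_cons (I : choiceType) (i : I) (s : seq I) :
  (FMonom (i :: s) : {fmonom I}) = mmul (fmu i) (FMonom s).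
Proof. by apply/val_inj; rewrite /= fmM fmU. Qed.

Lemma malgU_prod_gen (I : choiceType) (m : {fmonom I}) :
  (<< m >> : FreeA k I) = \prod_(i <- (m : seq I)) gen i.
Proof.
case: m => s; elim: s => [|i s IH] /=.
  by rewrite big_nil -[FMonom _]/(FMonom [::]) -fmoneE.
by rewrite big_cons -IH fmonom_cons /gen malgM_def fgmulUU mulr1.
Qed.

Lemma malgUZ (I : choiceType) (c : k) (m : {fmonom I}) :
  (<< c *g m >> : FreeA k I) = c *: << m >>.
Proof. by apply/malgP => m'; rewrite mcoeffZ !mcoeffU mulr_natr. Qed.

Lemma free_alg_ind (I : choiceType) (P : FreeA k I -> Prop) :
  P 0 -> (forall x y, P x -> P y -> P (x + y)) ->
  (forall c x, P x -> P (c *: x)) ->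
  P 1 -> (forall x y, P x -> P y -> P (x * y)) -> (forall i, P (gen i)) ->
  forall x, P x.
Proof.
move=> P0 PD PZ P1 PM Pg x; rewrite (monalgE x).
apply: big_ind => // m _; rewrite malgUZ; apply: PZ.
by rewrite malgU_prod_gen; apply: big_ind.
Qed.

(* The free algebra is only an [lalgType], so this is not an instance of [mulr_algr]. *)
Lemma scalar_comm (I : choiceType) (c : k) (y : FreeA k I) :
  c%:A * y = y * c%:A.
Proof.
have -> : c%:A = c%:MP :> FreeA k I.
  by apply/malgP => m; rewrite mcoeffZ mcoeff1 mcoeffC mulr_natr.
rewrite mul_malgC (monalgE y) mulr_suml scaler_sumr; apply: eq_bigr => m _.
by rewrite malgM_def fgmulUU mulm1 mulrC malgUZ [in RHS]malgUZ scalerA.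
Qed.

Section Ext.
Variables (I J : choiceType) (img : I -> FreeA k J).

Definition ext_monom (m : {fmonom I}) : FreeA k J := \prod_(i <- (m : seq I)) img i.

Lemma ext_monom_is_mmorphism : mmorphism ext_monom.
Proof.
split; last by rewrite /ext_monom fm1 big_nil.
by move=> m1 m2; rewrite /ext_monom fmM big_cat.
Qed.

HB.instance Definition _ :=
  monalg.isMultiplicative.Build _ _ ext_monom ext_monom_is_mmorphism.

Lemma extE : ext img = mmap (in_alg (FreeA k J)) ext_monom.
Proof. by []. Qed.

Lemma ext_is_additive : additive (ext img).
Proof. rewrite extE; exact: mmap_is_additive. Qed.

HB.instance Definition _ := GRing.isAdditive.Build _ _ (ext img) ext_is_additive.

Lemma ext_is_multiplicative : multiplicative (ext img).
Proof.
rewrite extE; apply: commr_mmap_is_multiplicative => g m m'.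
by rewrite /GRing.comm /= scalar_comm.
Qed.

HB.instance Definition _ :=
  GRing.isMultiplicative.Build _ _ (ext img) ext_is_multiplicative.

Lemma ext_gen i : ext img (gen i) = img i.
Proof. by rewrite extE /gen mmapU /= /ext_monom fmU big_seq1 scale1r !mul1r. Qed.

(* Rewriting with [raddfD], [rmorphM], ... directly makes unification unfold [ext]. *)
Lemma ext0 : ext img 0 = 0. Proof. exact: raddf0. Qed.
Lemma extD x y : ext img (x + y) = ext img x + ext img y. Proof. exact: raddfD. Qed.
Lemma extB x y : ext img (x - y) = ext img x - ext img y. Proof. exact: raddfB. Qed.
Lemma ext1 : ext img 1 = 1. Proof. exact: rmorph1. Qed.
Lemma extM x y : ext img (x * y) = ext img x * ext img y. Proof. exact: rmorphM. Qed.

Lemma ext_sum (T : Type) (r : seq T) (P : pred T) (F : T -> FreeA k I) :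
  ext img (\sum_(i <- r | P i) F i) = \sum_(i <- r | P i) ext img (F i).
Proof. exact: raddf_sum. Qed.

Lemma ext_prod (T : Type) (r : seq T) (P : pred T) (F : T -> FreeA k I) :
  ext img (\prod_(i <- r | P i) F i) = \prod_(i <- r | P i) ext img (F i).
Proof. exact: rmorph_prod. Qed.

Lemma extZ c x : ext img (c *: x) = c *: ext img x.
Proof.
rewrite -mul_malgC rmorphM /= -mulr_algl; congr (_ * _).
by rewrite extE mmapU /ext_monom fm1 big_nil mulr1.
Qed.

End Ext.

Lemma eq_ext (I J : choiceType) (f g : I -> FreeA k J) : f =1 g -> ext f =1 ext g.
Proof.
move=> fg; elim/free_alg_ind => [|x y Hx Hy|c x Hx||x y Hx Hy|i].
- by rewrite !ext0.
- by rewrite !extD Hx Hy.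
- by rewrite !extZ Hx.
- by rewrite !ext1.
- by rewrite !extM Hx Hy.
- by rewrite !ext_gen.
Qed.

Lemma ext_comp (I J L : choiceType) (f : I -> FreeA k J) (g : J -> FreeA k L) x :
  ext g (ext f x) = ext (fun i => ext g (f i)) x.
Proof.
elim/free_alg_ind: x => [|x y Hx Hy|c x Hx||x y Hx Hy|i].
- by rewrite (ext0 f) !ext0.
- by rewrite (extD f) (extD g) extD; congr (_ + _); [exact: Hx | exact: Hy].
- by rewrite (extZ f) (extZ g) extZ; congr (_ *: _); exact: Hx.
- by rewrite (ext1 f) !ext1.
- by rewrite (extM f) (extM g) extM; congr (_ * _); [exact: Hx | exact: Hy].
- by rewrite (ext_gen f) ext_gen.
Qed.

Lemma ext_commutator (I J : choiceType) (f : I -> FreeA k J) i j :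
  ext f (gen i * gen j - gen j * gen i) = f i * f j - f j * f i.
Proof. by rewrite extB; congr (_ - _); rewrite extM; congr (_ * _); exact: ext_gen. Qed.

Section Ideal.
Variables (I : choiceType) (R : FreeA k I -> Prop).
Local Notation J := (ideal_gen R).

Lemma ideal_gen0 : J 0.
Proof. by exists [::]; split => //; rewrite big_nil. Qed.

Lemma ideal_genD x y : J x -> J y -> J (x + y).
Proof.
move=> [s1 [H1 ->]] [s2 [H2 ->]]; exists (s1 ++ s2); split; last by rewrite big_cat.
by move=> t; rewrite mem_cat => /orP [/H1|/H2].
Qed.

Lemma ideal_genMl a x : J x -> J (a * x).
Proof.
move=> [s [H ->]]; exists [seq (a * t.1.1, t.1.2, t.2) | t <- s]; split.
  by move=> t /mapP [t' /H Ht' ->].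
by rewrite big_map mulr_sumr; apply: eq_bigr => t _; rewrite !mulrA.
Qed.

Lemma ideal_genMr x a : J x -> J (x * a).
Proof.
move=> [s [H ->]]; exists [seq (t.1.1, t.1.2, t.2 * a) | t <- s]; split.
  by move=> t /mapP [t' /H Ht' ->].
by rewrite big_map mulr_suml; apply: eq_bigr => t _; rewrite mulrA.
Qed.

Lemma ideal_gen_rel r : R r -> J r.
Proof.
move=> Hr; exists [:: (1, r, 1)]; split; last by rewrite big_seq1 mul1r mulr1.
by move=> t; rewrite inE => /eqP ->.
Qed.

Lemma ideal_gen_sum (T : Type) (r : seq T) (P : pred T) (F : T -> FreeA k I) :
  (forall i, P i -> J (F i)) -> J (\sum_(i <- r | P i) F i).
Proof. by move=> H; apply: big_ind => //; [exact: ideal_gen0 | exact: ideal_genD]. Qed.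

Definition eq_mod x y := J (x - y).

End Ideal.

Lemma ideal_gen_ext (I J : choiceType) (R : FreeA k I -> Prop) (R' : FreeA k J -> Prop)
    (f : I -> FreeA k J) :
  (forall r, R r -> ideal_gen R' (ext f r)) ->
  forall x, ideal_gen R x -> ideal_gen R' (ext f x).
Proof.
move=> H x [s [Hs ->]]; rewrite ext_sum big_seq; apply: ideal_gen_sum => t ts.
by rewrite !extM; apply: ideal_genMr; apply: ideal_genMl; apply: H; apply: Hs.
Qed.

End FreeAlgebra.

(** * Congruences on rings *)

Record congruence (T : nzRingType) (E : T -> T -> Prop) : Prop := Congruence {
  congr_refl : forall x, E x x;
  congr_sym : forall x y, E x y -> E y x;
  congr_trans : forall x y z, E x y -> E y z -> E x z;
  congr_add : forall x x' y y', E x x' -> E y y' -> E (x + y) (x' + y');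
  congr_mul : forall x x' y y', E x x' -> E y y' -> E (x * y) (x' * y')
}.

Lemma eq_mod_congruence (k : fieldType) (I : choiceType) (R : FreeA k I -> Prop) :
  congruence (eq_mod R).
Proof.
rewrite /eq_mod; split => [x|x y H|x y z H1 H2|x x' y y' H1 H2|x x' y y' H1 H2].
- by rewrite subrr; exact: ideal_gen0.
- by rewrite -opprB -mulN1r; apply: ideal_genMl.
- by rewrite -[x](subrK y) -addrA; apply: ideal_genD.
- by rewrite opprD addrACA; apply: ideal_genD.
- have -> : x * y - x' * y' = (x - x') * y + x' * (y - y').
    by rewrite mulrBl mulrBr addrA subrK.
  by apply: ideal_genD; [apply: ideal_genMr | apply: ideal_genMl].
Qed.

Section Congruence.
Variables (T : nzRingType) (E : T -> T -> Prop) (HE : congruence E).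

Lemma congr_eq x y : x = y -> E x y.
Proof. by move=> ->; apply: (congr_refl HE). Qed.

Lemma congr_mull a x y : E x y -> E (a * x) (a * y).
Proof. by move=> H; apply: (congr_mul HE) => //; apply: (congr_refl HE). Qed.

Lemma congr_mulr a x y : E x y -> E (x * a) (y * a).
Proof. by move=> H; apply: (congr_mul HE) => //; apply: (congr_refl HE). Qed.

Lemma congr_sum (I : Type) (r : seq I) (P : pred I) (F G : I -> T) :
  (forall i, P i -> E (F i) (G i)) ->
  E (\sum_(i <- r | P i) F i) (\sum_(i <- r | P i) G i).
Proof.
move=> H; elim: r => [|x r IH]; first by rewrite !big_nil; apply: (congr_refl HE).
by rewrite !big_cons; case: (boolP (P x)) => Px //; apply: (congr_add HE) => //; apply: H.
Qed.

Lemma congr_prod (I : Type) (r : seq I) (F G : I -> T) :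
  (forall i, E (F i) (G i)) ->
  E (\prod_(i <- r) F i) (\prod_(i <- r) G i).
Proof.
move=> H; elim: r => [|x r IH]; first by rewrite !big_nil; apply: (congr_refl HE).
by rewrite !big_cons; apply: (congr_mul HE).
Qed.

Lemma congr_sum0 (I : Type) (r : seq I) (P : pred I) (F : I -> T) :
  (forall i, P i -> E (F i) 0) -> E (\sum_(i <- r | P i) F i) 0.
Proof.
move=> H; apply: (congr_trans HE) (_ : E _ (\sum_(i <- r | P i) (0 : T))) _.
  exact: congr_sum.
by rewrite big1 //; apply: (congr_refl HE).
Qed.

Lemma congr_prod0 (I : eqType) (r : seq I) (F : I -> T) j :
  j \in r -> E (F j) 0 -> E (\prod_(i <- r) F i) 0.
Proof.
elim: r => [//|x r IH]; rewrite inE big_cons => /orP [/eqP <- Hj|Hr Hj].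
  by rewrite -(mul0r (\prod_(i <- r) F i)); apply: congr_mulr.
by rewrite -(mulr0 (F x)); apply: congr_mull; apply: IH.
Qed.

Definition commute_mod x y := E (x * y) (y * x).

Lemma commute_mod_sym x y : commute_mod x y -> commute_mod y x.
Proof. exact: (congr_sym HE). Qed.

Lemma commute_mod0 z : commute_mod 0 z.
Proof. by rewrite /commute_mod mul0r mulr0; apply: (congr_refl HE). Qed.

Lemma commute_mod1 z : commute_mod 1 z.
Proof. by rewrite /commute_mod mul1r mulr1; apply: (congr_refl HE). Qed.

Lemma commute_modD x y z : commute_mod x z -> commute_mod y z -> commute_mod (x + y) z.
Proof. by rewrite /commute_mod mulrDl mulrDr; apply: (congr_add HE). Qed.

Lemma commute_modM x y z : commute_mod x z -> commute_mod y z -> commute_mod (x * y) z.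
Proof.
rewrite /commute_mod => H1 H2; rewrite -mulrA.
by apply: (congr_trans HE) (congr_mull _ H2) _; rewrite !mulrA; apply: congr_mulr.
Qed.

Lemma commute_mod_prodl (I : eqType) (r : seq I) (F : I -> T) z :
  (forall i, i \in r -> commute_mod (F i) z) -> commute_mod (\prod_(i <- r) F i) z.
Proof.
elim: r => [|x r IH] H; first by rewrite big_nil; apply: commute_mod1.
rewrite big_cons; apply: commute_modM; first by apply: H; rewrite inE eqxx.
by apply: IH => i ir; apply: H; rewrite inE ir orbT.
Qed.

Lemma congr_prod_mul (I : eqType) (r : seq I) (F G : I -> T) :
  uniq r -> (forall i j, i \in r -> j \in r -> i != j -> commute_mod (F i) (G j)) ->
  E (\prod_(i <- r) F i * \prod_(i <- r) G i) (\prod_(i <- r) (F i * G i)).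
Proof.
elim: r => [|x r IH] /=; first by rewrite !big_nil mul1r; move=> *; apply: (congr_refl HE).
move=> /andP [xr ur] H; rewrite !big_cons -!mulrA; apply: congr_mull.
have HFG : commute_mod (\prod_(i <- r) F i) (G x).
  apply: commute_mod_prodl => i ir; apply: H; rewrite ?inE ?ir ?eqxx ?orbT //.
  by apply: contraNneq xr => <-.
apply: (congr_trans HE) (_ : E _ (G x * (\prod_(i <- r) F i * \prod_(i <- r) G i))) _.
  by rewrite !mulrA; apply: congr_mulr.
by apply: congr_mull; apply: IH => // i j ir jr; apply: H; rewrite inE ?ir ?jr orbT.
Qed.

Lemma congr_conjV W Wi Hb Hs : E (W * Wi) 1 -> E (Wi * W) 1 ->
  E (W * Hb) (Hs * W) -> E (Wi * Hs) (Hb * Wi).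
Proof.
move=> HWWi HWiW HW.
apply: (congr_trans HE) (_ : E _ (Wi * Hs * (W * Wi))) _.
  by rewrite -{1}[Wi * Hs]mulr1; apply: congr_mull; apply: (congr_sym HE).
rewrite mulrA -(mulrA Wi Hs W).
apply: (congr_trans HE) (_ : E _ (Wi * (W * Hb) * Wi)) _.
  by apply: congr_mulr; apply: congr_mull; apply: (congr_sym HE).
rewrite (mulrA Wi W Hb) -{2}[Hb]mul1r.
by apply: congr_mulr; apply: congr_mulr.
Qed.

Lemma congr_idemV1 W Wi : E (Wi * W) 1 -> E (Wi * Wi) Wi -> E Wi 1.
Proof.
move=> HWiW H.
apply: (congr_trans HE) (_ : E _ (Wi * (Wi * W))) _.
  by rewrite -{1}[Wi]mulr1; apply: congr_mull; apply: (congr_sym HE).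
by rewrite mulrA; apply: (congr_trans HE) HWiW; apply: congr_mulr.
Qed.

Lemma congr_invM Wa Wb Wab Wia Wib Wiab :
  E (Wa * Wb) Wab -> E (Wa * Wia) 1 -> E (Wb * Wib) 1 -> E (Wiab * Wab) 1 ->
  E (Wib * Wia) Wiab.
Proof.
move=> H1 H2 H3 H4.
apply: (congr_trans HE) (_ : E _ (Wiab * (Wa * Wb) * (Wib * Wia))) _.
  rewrite -{1}[Wib * Wia]mul1r; apply: congr_mulr; apply: (congr_sym HE).
  by apply: (congr_trans HE) H4; apply: congr_mull.
rewrite -mulrA -[X in E _ X]mulr1; apply: congr_mull.
rewrite -mulrA (mulrA Wb Wib Wia).
apply: (congr_trans HE) (_ : E _ (Wa * (1 * Wia))) _; last by rewrite mul1r.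
by apply: congr_mull; apply: congr_mulr.
Qed.

End Congruence.

(** * Braces *)

Section Brace.
Variables (X : zmodType) (sigma circ : X -> X -> X) (e : X).
Hypothesis Hsigma_bij : forall a : X, bijective (sigma a).
Hypothesis Hcirc_assoc : associative circ.
Hypothesis Hcirc_id : forall a : X, circ e a = a /\ circ a e = a.
Hypothesis Hbrace : forall a b c : X, circ a (b + c) = circ a b - a + circ a c.
Hypothesis Hsigma : forall a b : X, sigma a b = - a + circ a b.

Lemma circr0 a : circ a 0 = a.
Proof.
have := Hbrace a 0 0; rewrite addr0 => /(congr1 (fun z => z - circ a 0)).
by rewrite addrK subrr => /eqP; rewrite eq_sym subr_eq0 => /eqP.
Qed.

Lemma circ_unit_eq0 : e = 0.
Proof. by have := circr0 e; rewrite (proj1 (Hcirc_id 0)). Qed.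

Lemma sigma_unit b : sigma e b = b.
Proof. by rewrite Hsigma (proj1 (Hcirc_id b)) circ_unit_eq0 oppr0 add0r. Qed.

Lemma sigma0 a : sigma a 0 = 0.
Proof. by rewrite Hsigma circr0 addNr. Qed.

Lemma sigmaD a b c : sigma a (b + c) = sigma a b + sigma a c.
Proof. by rewrite !Hsigma Hbrace !addrA. Qed.

Lemma sigmaN a b : sigma a (- b) = - sigma a b.
Proof. by apply/eqP; rewrite -addr_eq0 -sigmaD addNr sigma0. Qed.

Lemma sigma_circ a b c : sigma (circ a b) c = sigma a (sigma b c).
Proof.
rewrite [sigma b c]Hsigma sigmaD sigmaN !Hsigma Hcirc_assoc.
by rewrite opprD opprK [a - _]addrC -addrA addNKr.
Qed.

Lemma sigma_sum a (s : seq X) : sigma a (\sum_(x <- s) x) = \sum_(x <- s) sigma a x.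
Proof.
elim: s => [|x s IH]; first by rewrite !big_nil sigma0.
by rewrite !big_cons sigmaD IH.
Qed.

Definition circ_seq (s : seq X) : X := foldr circ e s.

Lemma foldl_circE a s : foldl circ a s = circ a (circ_seq s).
Proof.
elim: s a => [|x s IH] a /=; first by rewrite (proj2 (Hcirc_id a)).
by rewrite IH Hcirc_assoc.
Qed.

Lemma foldr_sigmaE b s : foldr (fun a y => sigma a y) b s = sigma (circ_seq s) b.
Proof.
elim: s => [|x s IH] /=; first by rewrite sigma_unit.
by rewrite IH sigma_circ.
Qed.

Definition lam_seq (s : seq X) : seq X := foldr (fun a t => a :: map (sigma a) t) [::] s.

Lemma size_lam_seq s : size (lam_seq s) = size s.
Proof. by elim: s => //= x s IH; rewrite size_map IH. Qed.

Lemma nth_lam_seq s i : (i < size s)%N ->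
  nth 0 (lam_seq s) i = sigma (circ_seq (take i s)) (nth 0 s i).
Proof.
elim: s i => [|x s IH] [|i] //= Hi; first by rewrite sigma_unit.
by rewrite (nth_map 0) ?size_lam_seq // IH // sigma_circ.
Qed.

Lemma sum_lam_seq s : \sum_(x <- lam_seq s) x = circ_seq s.
Proof.
elim: s => [|x s IH] /=; first by rewrite big_nil circ_unit_eq0.
by rewrite big_cons big_map -sigma_sum IH Hsigma addrA subrr add0r.
Qed.

Lemma lam_seq_inj : injective lam_seq.
Proof.
elim=> [|x s IH] [|y t] //= [<-] /(inj_map (bij_inj (Hsigma_bij x))).
by move/IH ->.
Qed.

End Brace.

Lemma seq_first_diff (T : eqType) (x0 : T) (t u : seq T) : size t = size u -> t != u ->
  exists j, [/\ (j < size t)%N, take j t = take j u & nth x0 t j != nth x0 u j].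
Proof.
elim: t u => [|x t IH] [|y u] //= [Hs]; rewrite eqseq_cons.
case: (eqVneq x y) => [<-|xy] /= Htu; last by exists 0%N.
have [j [Hj Htk Hn]] := IH u Hs Htu.
by exists j.+1; split => //=; rewrite Htk.
Qed.

Lemma widen_ord_inj n m (le_nm : (n <= m)%N) : injective (widen_ord le_nm).
Proof. by move=> i j /(congr1 val) /= /val_inj. Qed.
Arguments widen_ord_inj {n m} le_nm.

Section SlotMaps.
Variables (A T : nzRingType) (E : T -> T -> Prop) (HE : congruence E).
Variables (N : nat) (S : 'I_N -> A -> T).
Hypothesis SM : forall i x y, S i (x * y) = S i x * S i y.
Hypothesis S_comm : forall i j x y, i != j -> commute_mod E (S i x) (S j y).

Lemma congr_prod_slotM (m : nat) (f : 'I_m -> 'I_N) (F G : 'I_m -> A) : injective f ->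
  E (\prod_(i < m) S (f i) (F i) * \prod_(i < m) S (f i) (G i))
    (\prod_(i < m) S (f i) (F i * G i)).
Proof.
move=> finj.
apply: (congr_trans HE) (_ : E _ (\prod_(i < m) (S (f i) (F i) * S (f i) (G i)))) _.
  apply: (congr_prod_mul HE); first exact: index_enum_uniq.
  by move=> i j _ _ ij; apply: S_comm; apply: contra ij => /eqP /finj ->.
by apply: (congr_eq HE); apply: eq_bigr => i _; rewrite SM.
Qed.

End SlotMaps.

Section SlotAlgebra.
Variables (X : finZmodType) (sigma circ : X -> X -> X) (e : X).
Hypothesis Hsigma_bij : forall a : X, bijective (sigma a).
Hypothesis Hcirc_assoc : associative circ.
Hypothesis Hcirc_id : forall a : X, circ e a = a /\ circ a e = a.
Hypothesis Hbrace : forall a b c : X, circ a (b + c) = circ a b - a + circ a c.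
Hypothesis Hsigma : forall a b : X, sigma a b = - a + circ a b.

Variables (A : nzRingType) (EA : A -> A -> Prop) (HA : congruence EA) (h wi : X -> A).
Hypothesis Ahh : forall a b, EA (h a * h b) ((a == b)%:R * h a).
Hypothesis Awih : forall a b, EA (wi a * h (sigma a b)) (h b * wi a).
Hypothesis Awiwi : forall a b, EA (wi b * wi a) (wi (circ a b)).
Hypothesis Awie : EA (wi e) 1.

Local Notation circ_seq := (circ_seq circ e).

(* [slotF] and [slotG] are, by conversion, [fslot] and [gslot] at [h := hG], [wi := wiG]. *)
Definition fslot (s : seq X) (i : nat) : A :=
  match drop i s with
  | a :: _ => h (foldr (fun b y => sigma b y) a (take i s))
  | [::] => \prod_(a <- rev s) wi a
  end.

Definition gslot (s : seq X) (i : nat) : A :=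
  (if drop i s is a :: _ then h a else 1) *
  (if take i s is a :: t then wi (foldl circ a t) else 1).

Lemma prod_rev_wi s : EA (\prod_(a <- rev s) wi a) (wi (circ_seq s)).
Proof.
elim: s => [|x s IH]; first by rewrite big_nil; apply: (congr_sym HA).
rewrite rev_cons -cats1 big_cat big_seq1 /=.
by apply: (congr_trans HA) _ (Awiwi _ _); apply: (congr_mulr HA).
Qed.

Lemma wi_foldl_circ u : EA (if u is a :: t then wi (foldl circ a t) else 1) (wi (circ_seq u)).
Proof.
case: u => [|a t] /=; first exact: (congr_sym HA).
by rewrite (foldl_circE Hcirc_assoc Hcirc_id); apply: (congr_refl HA).
Qed.

Lemma fslot_lt s i : (i < size s)%N ->
  fslot s i = h (sigma (circ_seq (take i s)) (nth 0 s i)).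
Proof.
by move=> Hi; rewrite /fslot (drop_nth 0 Hi) (foldr_sigmaE Hcirc_assoc Hcirc_id Hbrace Hsigma).
Qed.

Lemma fslot_size s : EA (fslot s (size s)) (wi (circ_seq s)).
Proof. by rewrite /fslot drop_size; apply: prod_rev_wi. Qed.

Lemma gslot_lt s i : (i < size s)%N ->
  EA (gslot s i) (h (nth 0 s i) * wi (circ_seq (take i s))).
Proof.
by move=> Hi; rewrite /gslot (drop_nth 0 Hi); apply: (congr_mull HA); apply: wi_foldl_circ.
Qed.

Lemma gslot_size s : EA (gslot s (size s)) (wi (circ_seq s)).
Proof. by rewrite /gslot drop_size take_size mul1r; apply: wi_foldl_circ. Qed.

(* Once the w^{-1} of [gslot t i] has been moved across the h of [fslot s i],
   the two h's meet and are orthogonal unless the entries agree. *)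
Lemma gslot_mul_fslot t s i : (i < size s)%N -> (i <= size t)%N -> take i t = take i s ->
  EA (gslot t i * fslot s i)
     ((if (i < size t)%N then (nth 0 t i == nth 0 s i)%:R else 1) * gslot s i).
Proof.
move=> Hs Ht Htake; rewrite (fslot_lt Hs).
set P := circ_seq (take i s).
have HW : EA (if take i t is a :: u then wi (foldl circ a u) else 1) (wi P).
  by rewrite /P -Htake; apply: wi_foldl_circ.
have Hcore : EA ((if take i t is a :: u then wi (foldl circ a u) else 1) *
                 h (sigma P (nth 0 s i))) (h (nth 0 s i) * wi P).
  by apply: (congr_trans HA) _ (Awih _ _); apply: (congr_mulr HA).
rewrite /gslot; case: ltnP => Hit.
- rewrite (drop_nth 0 Hit) -mulrA.
  apply: (congr_trans HA) (congr_mull HA _ Hcore) _.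
  apply: (congr_trans HA)
    (_ : EA _ ((nth 0 t i == nth 0 s i)%:R * (h (nth 0 s i) * wi P))) _.
    rewrite !mulrA; apply: (congr_mulr HA); apply: (congr_trans HA) (Ahh _ _) _.
    case: eqP => [->|_]; first exact: (congr_refl HA).
    by rewrite /= mulr0n !mul0r; apply: (congr_refl HA).
  by apply: (congr_mull HA); apply: (congr_sym HA); apply: gslot_lt.
- rewrite drop_oversize // mul1r.
  apply: (congr_trans HA) Hcore _; rewrite mul1r.
  by apply: (congr_sym HA); apply: gslot_lt.
Qed.

Section Slots.
Variables (T : nzRingType) (E : T -> T -> Prop) (HE : congruence E).
Variables (m : nat) (S : 'I_m.+2 -> A -> T).
Hypothesis S_congr : forall i x y, EA x y -> E (S i x) (S i y).
Hypothesis SM : forall i x y, S i (x * y) = S i x * S i y.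
Hypothesis S0 : forall i, S i 0 = 0.
Hypothesis S_comm : forall i j x y, i != j -> commute_mod E (S i x) (S j y).

Local Notation widen := (widen_ord (leqnSn m.+1)).

(* Only the summand indexed by the prefix [take m u] survives. *)
Lemma sum_prod_gslot_fslot (u : m.+1.-tuple X) :
  E (\sum_(t : m.-tuple X) \prod_(i < m.+1) S (widen i) (gslot t i * fslot u i))
    (\prod_(i < m.+1) S (widen i) (gslot u i)).
Proof.
have Hu : size u = m.+1 := size_tuple u.
have Ht0 : size (take m u) == m by rewrite size_take Hu ltnSn.
rewrite (bigD1 (Tuple Ht0)) //= -[X in E _ X]addr0; apply: (congr_add HE).
  apply: (congr_prod HE) => i; apply: S_congr.
  have Hi : (i < size u)%N by rewrite Hu.
  have Hi' : (i <= size (take m u))%N by rewrite size_take Hu ltnSn -ltnS.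
  have Htk : take i (take m u) = take i u by rewrite take_takel // -ltnS.
  apply: (congr_trans HA) (gslot_mul_fslot Hi Hi' Htk) _.
  rewrite size_take Hu ltnSn; case: ltnP => Him; last by rewrite mul1r; apply: (congr_refl HA).
  by rewrite nth_take // eqxx mul1r; apply: (congr_refl HA).
apply: (congr_sum0 HE) => t tt0.
have [j [Hj Htk Hn]] := seq_first_diff 0 (etrans (size_tuple t) (esym (size_tuple _))) tt0.
have Hjm : (j < m.+1)%N by rewrite (leq_trans Hj) // size_tuple.
apply: (congr_prod0 HE (mem_index_enum (Ordinal Hjm))) => /=.
rewrite -(S0 (widen (Ordinal Hjm))); apply: S_congr => /=.
have Hi : (j < size u)%N by rewrite Hu.
have Htk' : take j t = take j u.
  by rewrite Htk /= take_takel // ltnW // -(size_tuple t).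
apply: (congr_trans HA) (gslot_mul_fslot Hi (ltnW Hj) Htk') _.
rewrite Hj.
have -> : (nth 0 t j == nth 0 u j) = false.
  by apply/negbTE; move: Hn; rewrite /= nth_take // -(size_tuple t).
by rewrite /= mulr0n mul0r; apply: (congr_refl HA).
Qed.

Lemma closed_form_step :
  E ((\sum_(t : m.-tuple X) \prod_(i < m.+1) S (widen i) (gslot t i)) *
     (\sum_(u : m.+1.-tuple X) \prod_(i < m.+2) S i (fslot u i)))
    (\sum_(u : m.+1.-tuple X) \prod_(i < m.+2) S i (gslot u i)).
Proof.
rewrite mulr_suml.
under eq_bigr => t _ do rewrite mulr_sumr.
rewrite exchange_big /=; apply: (congr_sum HE) => u _.
rewrite big_ord_recr [in X in E _ X]big_ord_recr /=.
under eq_bigr => t _ do rewrite mulrA.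
rewrite -mulr_suml; apply: (congr_mul HE).
  apply: (congr_trans HE) _ (sum_prod_gslot_fslot u).
  apply: (congr_sum HE) => t _.
  exact: (congr_prod_slotM HE SM S_comm (fun i : 'I_m.+1 => gslot t i)
    (fun i : 'I_m.+1 => fslot u i) (widen_ord_inj (leqnSn m.+1))).
apply: S_congr; apply: (congr_trans HA) (_ : EA _ (wi (circ_seq u))) _.
  by have := fslot_size u; rewrite size_tuple.
by have := gslot_size u; rewrite size_tuple; apply: (congr_sym HA).
Qed.

End Slots.

Section Reindex.
Variables (T : nzRingType) (E : T -> T -> Prop) (HE : congruence E).
Variables (m : nat) (S : 'I_m.+1 -> A -> T).
Hypothesis S_congr : forall i x y, EA x y -> E (S i x) (S i y).

Definition coproduct_summand (t : seq X) : T :=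
  (\prod_(i < m) S (widen_ord (leqnSn m) i) (h (nth 0 t i))) *
  S ord_max (wi (\sum_(x <- t) x)).

Lemma fslot_reindex :
  E (\sum_(s : m.-tuple X) \prod_(i < m.+1) S i (fslot s i))
    (\sum_(t : m.-tuple X) coproduct_summand t).
Proof.
have lamP (s : m.-tuple X) : size (lam_seq sigma s) == m by rewrite size_lam_seq size_tuple.
have lam_inj : injective (fun s => Tuple (lamP s)).
  by move=> s1 s2 /(congr1 val) /= /(lam_seq_inj Hsigma_bij) /val_inj.
rewrite [X in E _ X](reindex_inj lam_inj) /=.
apply: (congr_sum HE) => s _; rewrite big_ord_recr /coproduct_summand /=.
apply: (congr_mul HE).
  apply: (congr_eq HE); apply: eq_bigr => i _ /=.
  have Hi : (i < size s)%N by rewrite size_tuple.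
  by rewrite (fslot_lt Hi) (nth_lam_seq Hcirc_assoc Hcirc_id Hbrace Hsigma Hi).
apply: S_congr; rewrite (sum_lam_seq Hcirc_id Hbrace Hsigma).
by have := fslot_size s; rewrite size_tuple.
Qed.

End Reindex.

End SlotAlgebra.

Section TupleSums.
Variables (X : finType) (V : nmodType).

Lemma big_tuple_cons n (F : n.+1.-tuple X -> V) :
  \sum_(t : n.+1.-tuple X) F t = \sum_(x : X) \sum_(t : n.-tuple X) F [tuple of x :: t].
Proof.
rewrite pair_big /= (reindex (fun p : X * n.-tuple X => [tuple of p.1 :: p.2])) //=.
exists (fun t : n.+1.-tuple X => (thead t, [tuple of behead t])) => [[x t]|t] _ /=.
  by congr (_, _); apply: val_inj.
by rewrite [RHS]tuple_eta.
Qed.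

Lemma big_tuple1 (F : 1.-tuple X -> V) :
  \sum_(t : 1.-tuple X) F t = \sum_(x : X) F [tuple x].
Proof.
rewrite big_tuple_cons; apply: eq_bigr => x _.
rewrite (big_pred1 [tuple]) => [|t]; first by congr F; apply: val_inj.
by rewrite [t]tuple0; apply/esym/eqP.
Qed.

End TupleSums.

Section FiberSums.
Variables (X : finZmodType) (T : nzRingType).

Lemma sum_tuple_fibers m (F : m.-tuple X -> T) (G : X -> T) :
  \sum_(a : X) (\sum_(t : m.-tuple X | \sum_(x <- t) x == a) F t) * G a =
  \sum_(t : m.-tuple X) F t * G (\sum_(x <- t) x).
Proof.
rewrite (eq_bigr (fun a => \sum_(t : m.-tuple X)
   (if \sum_(x <- t) x == a then F t * G (\sum_(x <- t) x) else 0))); last first.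
  move=> a _; rewrite mulr_suml big_mkcond; apply: eq_bigr => t _.
  by case: eqP => [->|_]; rewrite ?mul0r.
rewrite exchange_big; apply: eq_bigr => t _.
by rewrite -big_mkcond (big_pred1 (\sum_(x <- t) x)) // => a /=; rewrite eq_sym.
Qed.

Lemma sum_pair_fibers (F : X * X -> T) :
  \sum_(x : X) \sum_(bc : X * X | bc.1 + bc.2 == x) F bc = \sum_(bc : X * X) F bc.
Proof. by rewrite (partition_big (fun bc : X * X => bc.1 + bc.2) predT). Qed.

Lemma sum_tuple1_fiber (g : 'I_1 -> X -> T) a :
  g ord0 a = \sum_(t : 1.-tuple X | \sum_(x <- t) x == a) \prod_(i < 1) g i (nth 0 t i).
Proof.
rewrite big_mkcond big_tuple1.
under eq_bigr => x _ do rewrite big_ord1 /= big_seq1.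
by rewrite -big_mkcond big_pred1_eq.
Qed.

Lemma sum_tuple_fiber_split p (g : 'I_p.+2 -> X -> T) a :
  \sum_(t : p.+1.-tuple X | \sum_(x <- t) x == a)
    ((\sum_(bc : X * X | bc.1 + bc.2 == nth 0 t 0) g ord0 bc.1 * g (lift ord0 ord0) bc.2) *
     \prod_(i < p) g (lift ord0 (lift ord0 i)) (nth 0 t (lift ord0 i)))
  = \sum_(u : p.+2.-tuple X | \sum_(x <- u) x == a) \prod_(i < p.+2) g i (nth 0 u i).
Proof.
rewrite big_mkcond big_tuple_cons [RHS]big_mkcond big_tuple_cons.
pose P (t : seq X) := \prod_(i < p) g (lift ord0 (lift ord0 i)) (nth 0 t i).
pose G bc (t : p.-tuple X) := if bc.1 + (bc.2 + \sum_(y <- t) y) == a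
  then g ord0 bc.1 * (g (lift ord0 ord0) bc.2 * P t) else 0.
transitivity (\sum_(x : X) \sum_(t : p.-tuple X) \sum_(bc : X * X | bc.1 + bc.2 == x) G bc t).
  apply: eq_bigr => x _; apply: eq_bigr => t _ /=.
  rewrite big_cons /G; case: ifP => Ha.
    rewrite mulr_suml; apply: eq_bigr => bc /eqP Hbc.
    by rewrite addrA Hbc Ha mulrA.
  by rewrite big1 // => bc /eqP Hbc; rewrite addrA Hbc Ha.
under eq_bigr => x _ do rewrite exchange_big.
rewrite sum_pair_fibers.
under [RHS]eq_bigr => b _ do rewrite big_tuple_cons.
rewrite [RHS]pair_bigA /=; apply: eq_bigr => [[b c]] _ /=; apply: eq_bigr => t _.
by rewrite /G !big_cons; case: ifP => // _; rewrite big_ord_recl big_ord_recl.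
Qed.

End FiberSums.

Lemma gslot_closed_form2 (X : finZmodType) (circ : X -> X -> X) (A T : nzRingType)
    (h wi : X -> A) (S : 'I_2 -> A -> T) :
  \sum_(a : X) S ord0 (h a) * S ord_max (wi a) =
  \sum_(t : 1.-tuple X) \prod_(i < 2) S i (gslot circ h wi t i).
Proof.
rewrite big_tuple1; apply: eq_bigr => x _.
rewrite big_ord_recl big_ord1 /gslot /= mulr1 mul1r.
by congr (_ * _); congr S; apply: val_inj.
Qed.

(** * Tensor powers of the Yang-Baxter algebra *)

Lemma commute_mod_ext (k : fieldType) (I J : choiceType) (R : FreeA k J -> Prop)
    (f : I -> FreeA k J) z :
  (forall i, commute_mod (eq_mod R) (f i) z) -> forall x, commute_mod (eq_mod R) (ext f x) z.
Proof.
move=> Hf; have HR := eq_mod_congruence R.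
elim/free_alg_ind => [|x y Hx Hy|c x Hx||x y Hx Hy|i].
- by rewrite ext0; exact: commute_mod0.
- by rewrite extD; exact: (commute_modD HR Hx Hy).
- rewrite extZ -mulr_algl.
  exact: (commute_modM HR (congr_eq HR (scalar_comm _ _)) Hx).
- by rewrite ext1; exact: commute_mod1.
- by rewrite extM; exact: (commute_modM HR Hx Hy).
- by rewrite ext_gen.
Qed.

Section TensorSlots.
Variables (k : fieldType) (X : finType) (sigma tau : X -> X -> X).
Local Notation RA := (@relA k X sigma tau).
Local Notation RT n := (@relT k X sigma tau n).

Lemma slotE n (i : 'I_n) (x : FreeA k (Gen X)) :
  slot i x = ext (fun g : Gen X => gen (i, g)) x.
Proof. by []. Qed.

Lemma slot_gen n (i : 'I_n) (g : Gen X) : slot i (gen g : FreeA k (Gen X)) = gen (i, g).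
Proof. exact: ext_gen. Qed.

Lemma slot0 n (i : 'I_n) : slot i (0 : FreeA k (Gen X)) = 0.
Proof. exact: ext0. Qed.

Lemma slotM n (i : 'I_n) (x y : FreeA k (Gen X)) : slot i (x * y) = slot i x * slot i y.
Proof. exact: extM. Qed.

Lemma slot_eq_mod n (i : 'I_n) (x y : FreeA k (Gen X)) :
  eq_mod RA x y -> eq_mod (RT n) (slot i x) (slot i y).
Proof.
rewrite /eq_mod !slotE -extB; apply: ideal_gen_ext => r Hr.
by apply: ideal_gen_rel; left; exists i, r.
Qed.

Lemma slot_comm_gen n (i j : 'I_n) (g : Gen X) (x : FreeA k (Gen X)) : i != j ->
  commute_mod (eq_mod (RT n)) (slot i x) (gen (j, g)).
Proof.
move=> ij; apply: commute_mod_ext => g'.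
by apply: ideal_gen_rel; right; exists i, j, g', g.
Qed.

Lemma slot_comm n (i j : 'I_n) (x y : FreeA k (Gen X)) : i != j ->
  commute_mod (eq_mod (RT n)) (slot i x) (slot j y).
Proof.
move=> ij; have HT := eq_mod_congruence (RT n).
apply: (commute_mod_sym HT); apply: commute_mod_ext => g.
by apply: (commute_mod_sym HT); apply: slot_comm_gen.
Qed.

Lemma rename_slot m m' (f : 'I_m -> 'I_m') (i : 'I_m) (x : FreeA k (Gen X)) :
  rename (fun q : TGen X m => (f q.1, q.2)) (slot i x) = slot (f i) x.
Proof. by rewrite /rename slotE ext_comp [RHS]slotE; apply: eq_ext => g; rewrite ext_gen. Qed.

Lemma eq_mod_rename_slots m m' (f : 'I_m -> 'I_m') (x y : FreeA k (TGen X m)) :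
  injective f -> eq_mod (RT m) x y ->
  eq_mod (RT m') (rename (fun q : TGen X m => (f q.1, q.2)) x)
                 (rename (fun q : TGen X m => (f q.1, q.2)) y).
Proof.
move=> finj; rewrite /eq_mod /rename -extB; apply: ideal_gen_ext => r.
case=> [[i [r0 [Hr0 ->]]] | [i [j [g [g' [ij ->]]]]]].
  rewrite -[ext _ _]/(rename (fun q : TGen X m => (f q.1, q.2)) (slot i r0)) rename_slot.
  by apply: ideal_gen_rel; left; exists (f i), r0.
rewrite ext_commutator; apply: ideal_gen_rel; right.
by exists (f i), (f j), g, g'; rewrite (inj_eq finj).
Qed.

End TensorSlots.

Section IteratedCoproduct.
Variables (k : fieldType) (X : finZmodType).
Local Notation h := (@hG k X).
Local Notation wi := (@wiG k X).
Local Notation add := (@GRing.add X).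

Lemma slot_h n (i : 'I_n) a : slot i (h a) = gen (i, hgen a).
Proof. exact: slot_gen. Qed.

Lemma Dslot0_slot_lift p (i : 'I_p) x :
  Dslot0 add (m := p) (slot (lift ord0 i) (h x)) = slot (lift ord0 (lift ord0 i)) (h x).
Proof. by rewrite /Dslot0 slot_h ext_gen /= slot_h. Qed.

Lemma Dslot0_slot0 p x :
  Dslot0 add (m := p) (slot ord0 (h x)) =
  \sum_(bc : X * X | bc.1 + bc.2 == x) slot ord0 (h bc.1) * slot (lift ord0 ord0) (h bc.2).
Proof.
rewrite /Dslot0 slot_h ext_gen /= /rename ext_sum; apply: eq_bigr => bc _.
rewrite extM; congr (_ * _).
  rewrite -[ext _ _]/(rename (fun q : TGen X 2 => (widen_ord (two_le_SS p) q.1, q.2))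
                            (slot ord0 (h bc.1))) rename_slot.
  by have -> : widen_ord (two_le_SS p) ord0 = ord0 by apply: val_inj.
rewrite -[ext _ _]/(rename (fun q : TGen X 2 => (widen_ord (two_le_SS p) q.1, q.2))
                          (slot ord_max (h bc.2))) rename_slot.
by have -> : widen_ord (two_le_SS p) ord_max = lift ord0 ord0 by apply: val_inj.
Qed.

Lemma Dslot0_prod_h p (t : seq X) :
  Dslot0 add (m := p) (\prod_(i < p.+1) slot i (h (nth 0 t i))) =
  (\sum_(bc : X * X | bc.1 + bc.2 == nth 0 t 0)
      slot ord0 (h bc.1) * slot (lift ord0 ord0) (h bc.2)) *
  \prod_(i < p) slot (lift ord0 (lift ord0 i)) (h (nth 0 t (lift ord0 i))).
Proof.
rewrite [LHS]/Dslot0 ext_prod big_ord_recl; congr (_ * _); first exact: Dslot0_slot0.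
by apply: eq_bigr => i _; exact: Dslot0_slot_lift.
Qed.

Lemma Dn_aux_h p a : Dn_aux add p (h a) =
  \sum_(t : p.+1.-tuple X | \sum_(x <- t) x == a) \prod_(i < p.+1) slot i (h (nth 0 t i)).
Proof.
elim: p a => [|p IH] a; first exact: (sum_tuple1_fiber (fun i x => slot i (h x))).
rewrite -[LHS]/(Dslot0 add (Dn_aux add p (h a))) IH [LHS]/Dslot0 ext_sum.
rewrite -(sum_tuple_fiber_split (fun i x => slot i (h x))).
by apply: eq_bigr => t _; exact: Dslot0_prod_h.
Qed.

Lemma tensor_id_Dn_Fcal p :
  @tensor_id k X p.+2 (Dn add p.+1) (Fcal k X) =
  \sum_(t : p.+1.-tuple X) coproduct_summand h wi (fun i : 'I_p.+2 => slot i) t.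
Proof.
rewrite /tensor_id /Fcal ext_sum.
pose F (t : p.+1.-tuple X) :=
  \prod_(i < p.+1) slot (widen_ord (leqnSn p.+1) i) (h (nth 0 t i)).
transitivity (\sum_(a : X) (\sum_(t : p.+1.-tuple X | \sum_(x <- t) x == a) F t) *
                           slot ord_max (wi a)); last exact: sum_tuple_fibers.
apply: eq_bigr => a _; rewrite extM; congr (_ * _).
  rewrite slot_h ext_gen /= -[gen (hgen a)]/(h a) Dn_aux_h /rename ext_sum.
  apply: eq_bigr => t _; rewrite ext_prod; apply: eq_bigr => i _.
  rewrite -[ext _ _]/(rename (fun r : TGen X p.+1 => (widen_ord (leq_pred p.+2) r.1, r.2))
                         (slot i (h (nth 0 t i)))) rename_slot.
  by have -> : widen_ord (leq_pred p.+2) i = widen_ord (leqnSn p.+1) i by apply: val_inj.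
rewrite (@slot_gen k X 2 ord_max (wigen a)) ext_gen (@slot_gen k X p.+2 ord_max (wigen a)) /=.
case: insubP => [i _ Hi|]; last by rewrite ltnSn.
by have -> : i = ord_max by apply: val_inj.
Qed.

End IteratedCoproduct.

Section YangBaxter.
Variables (k : fieldType) (X : finZmodType) (sigma tau circ : X -> X -> X) (e : X).
Hypothesis Hsigma_bij : forall a : X, bijective (sigma a).
Hypothesis Hcirc_assoc : associative circ.
Hypothesis Hcirc_id : forall a : X, circ e a = a /\ circ a e = a.
Hypothesis Hbrace : forall a b c : X, circ a (b + c) = circ a b - a + circ a c.
Hypothesis Hsigma : forall a b : X, sigma a b = - a + circ a b.
Hypothesis Hw : forall a b : X, eqYB sigma tau (wG k a * wG k b) (wG k (circ a b)).

Local Notation RA := (@relA k X sigma tau).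
Local Notation RT n := (@relT k X sigma tau n).
Local Notation h := (@hG k X).
Local Notation w := (@wG k X).
Local Notation wi := (@wiG k X).

Let HA := eq_mod_congruence RA.

Lemma rel_hh a b : eq_mod RA (h a * h b) ((a == b)%:R * h a).
Proof. by apply: ideal_gen_rel; left; exists a, b. Qed.

Lemma rel_wiw a : eq_mod RA (wi a * w a) 1.
Proof. by apply: ideal_gen_rel; right; left; exists a. Qed.

Lemma rel_wwi a : eq_mod RA (w a * wi a) 1.
Proof. by apply: ideal_gen_rel; right; right; left; exists a. Qed.

Lemma rel_wh a b : eq_mod RA (w a * h b) (h (sigma a b) * w a).
Proof. by apply: ideal_gen_rel; do 4 right; left; exists a, b. Qed.

Lemma rel_wih a b : eq_mod RA (wi a * h (sigma a b)) (h b * wi a).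
Proof. exact: (congr_conjV HA (rel_wwi a) (rel_wiw a) (rel_wh a b)). Qed.

Lemma rel_wiwi a b : eq_mod RA (wi b * wi a) (wi (circ a b)).
Proof. exact: (congr_invM HA (Hw a b) (rel_wwi a) (rel_wwi b) (rel_wiw _)). Qed.

Lemma rel_wie : eq_mod RA (wi e) 1.
Proof.
apply: (congr_idemV1 HA (rel_wiw e)).
by have := rel_wiwi e e; rewrite (proj1 (Hcirc_id e)).
Qed.

Lemma Fbar_coproduct p :
  eqTens sigma tau (Fbar k sigma p.+2)
    (@tensor_id k X p.+2 (Dn (@GRing.add X) p.+1) (Fcal k X)).
Proof.
rewrite tensor_id_Dn_Fcal.
exact: (fslot_reindex Hsigma_bij Hcirc_assoc Hcirc_id Hbrace Hsigma HA h rel_wiwi rel_wie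
  (eq_mod_congruence (RT p.+2)) (m := p.+1) (S := fun i : 'I_p.+2 => slot i)
  (@slot_eq_mod _ _ _ _ _)).
Qed.

Lemma rename_widen_Fn_closed q :
  rename (fun r : TGen X q.+2 => (widen_ord (leqnSn q.+2) r.1, r.2)) (Fn_closed k circ q.+2) =
  \sum_(t : q.+1.-tuple X) \prod_(i < q.+2) slot (widen_ord (leqnSn q.+2) i) (slotG k circ t i).
Proof.
rewrite /Fn_closed /rename ext_sum; apply: eq_bigr => t _.
by rewrite ext_prod; apply: eq_bigr => i _; exact: rename_slot.
Qed.

Lemma Ffull_closed_form p : eqTens sigma tau (Ffull_aux k sigma p) (Fn_closed k circ p.+2).
Proof.
elim: p => [|q IH].
  apply: (congr_eq (eq_mod_congruence (RT 2))).
  exact: (gslot_closed_form2 circ h wi (fun i : 'I_2 => slot i)).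
have HT := eq_mod_congruence (RT q.+3).
have widen_IH := eq_mod_rename_slots (widen_ord_inj (leqnSn q.+2)) IH.
apply: (congr_trans HT) (congr_mulr HT _ widen_IH) _.
rewrite rename_widen_Fn_closed.
exact: (closed_form_step Hcirc_assoc Hcirc_id Hbrace Hsigma HA rel_hh rel_wih rel_wiwi rel_wie HT
  (m := q.+1) (S := fun i : 'I_q.+3 => slot i) (@slot_eq_mod _ _ _ _ _) (@slotM _ _ _)
  (@slot0 _ _ _) (@slot_comm _ _ _ _ _)).
Qed.

End YangBaxter.

Unset Implicit Arguments.
Set Strict Implicit.

Theorem lemma2p18 (k : fieldType) (X : finZmodType) (sigma tau : X -> X -> X)
  (circ : X -> X -> X) (e : X)
  (Hsigma_bij : forall a : X, bijective (sigma a))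
  (Hcirc_assoc : associative circ)
  (Hcirc_id : forall a : X, circ e a = a /\ circ a e = a)
  (Hcirc_inv : forall a : X, exists b : X, circ a b = e /\ circ b a = e)
  (Hbrace : forall a b c : X, circ a (b + c) = circ a b - a + circ a c)
  (Hsigma : forall a b : X, sigma a b = - a + circ a b)
  (Hsigtau : forall a b : X, sigma (sigma a b) (tau b a) = a)
  (Hw : forall a b : X,
      eqYB sigma tau (wG k a * wG k b) (wG k (circ a b)))
  (n : nat) (Hn : (2 <= n)%N) :
  eqTens sigma tau (Fbar k sigma n)
    (@tensor_id k X n (Dn (@GRing.add X) n.-1) (Fcal k X)) /\
  eqTens sigma tau (Ffull k sigma n) (Fn_closed k circ n).
Proof.
case: n Hn => [|[|p]] // _; split.
  exact: (Fbar_coproduct Hsigma_bij Hcirc_assoc Hcirc_id Hbrace Hsigma Hw p).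
exact: (Ffull_closed_form Hcirc_assoc Hcirc_id Hbrace Hsigma Hw p).
Qed.
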